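(* Let $k$ be a positive integer and $n\ge3$. Then $O_{R,k}(C_n)=\mathcal{N}$ if $n=3$ (for all $k\ge1$); $O_{R,k}(C_n)=\mathcal{M}$ if $n\ge4$ is even (for all $k\ge1$); and $O_{R,k}(C_n)=\mathcal{M}$ if $n\ge5$ is odd and $k\ge2$.
   Context: $C_n$ is the cycle on $n$ vertices. $d$ is the shortest-path distance and $d_k(x,y)=\min\{d(x,y),k+1\}$. A set $S$ is a distance-$k$ resolving set if for all distinct $x,y$ some $z\in S$ has $d_k(x,z)\ne d_k(y,z)$. In the Maker-Breaker distance-$k$ resolving game, Maker and Breaker alternately select a not-yet-chosen vertex; Maker wins if his selected vertices form a distance-$k$ resolving set, Breaker wins otherwise. $O_{R,k}(G)=\mathcal{M}$ if Maker has a winning strategy whether he moves first or second, $\mathcal{B}$ if Breaker has a winning strategy whether she moves first or second, and $\mathcal{N}$ if the first player has a winning strategy. *)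

From mathcomp Require Import all_boot.
Set Implicit Arguments. Unset Strict Implicit. Unset Printing Implicit Defensive.

Section Graphs.
Variable T : finType.

Fixpoint ball (e : rel T) (m : nat) (x : T) : {set T} :=
  match m with
  | 0 => [set x]
  | m'.+1 => let B := ball e m' x in B :|: [set y | [exists z in B, e z y]]
  end.

(* Shortest-path distance: least m such that y lies within distance m of x.
   (Only used on connected graphs, where d(x,y) < #|T|.) *)
Definition gdist (e : rel T) (x y : T) : nat :=
  find (fun m => y \in ball e m x) (iota 0 #|T|).

Definition dist_k (e : rel T) (k : nat) (x y : T) : nat := minn (gdist e x y) k.+1.

Definition resolving_k (e : rel T) (k : nat) (S : {set T}) : bool :=
  [forall x, forall y, (x != y) ==>
     [exists z in S, dist_k e k x z != dist_k e k y z]].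

(* Maker-Breaker game on board T with Maker's winning predicate W on his final
   set.  [maker_wins W fuel mturn M B] : Maker (holding M, Breaker holding B)
   has a winning strategy when it is Maker's turn iff mturn. *)
Fixpoint maker_wins (W : {set T} -> bool) (fuel : nat) (mturn : bool)
    (M B : {set T}) : bool :=
  match fuel with
  | 0 => W M
  | f.+1 =>
    let F := ~: (M :|: B) in
    if F == set0 then W M else
    if mturn then [exists x in F, maker_wins W f false (x |: M) B]
    else [forall x in F, maker_wins W f true M (x |: B)]
  end.

Definition maker_wins_first (W : {set T} -> bool) : bool :=
  maker_wins W #|T| true set0 set0.
Definition maker_wins_second (W : {set T} -> bool) : bool :=
  maker_wins W #|T| false set0 set0.

End Graphs.

(* Outcomes: M (Maker wins both as first and second player), B (Breaker wins
   both), N (first player wins), P (second player wins; excluded in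
   Maker-Breaker games, listed only to make the classification total). *)
Inductive outcome := Out_M | Out_B | Out_N | Out_P.

(* Breaker has a winning strategy exactly when Maker has none (finite game). *)
Definition game_outcome (T : finType) (W : {set T} -> bool) : outcome :=
  match maker_wins_first W, maker_wins_second W with
  | true, true => Out_M
  | false, false => Out_B
  | true, false => Out_N
  | false, true => Out_P
  end.

Definition O_Rk (T : finType) (e : rel T) (k : nat) : outcome :=
  game_outcome (resolving_k e k).

Definition cycle_rel (n : nat) : rel 'I_n :=
  fun i j => (i.+1 %% n == j) || (j.+1 %% n == i).

(* Maker wins by a pairing strategy: given disjoint pairs of vertices such that every
   set meeting all pairs is distance-k resolving, Maker answers each Breaker move inside
   a pair by taking its partner, whether he moves first or second.
   On C_n with n >= 5 take the pairs {2i, 2i+1}.  If x <> y lie outside a set S meeting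
   all pairs, the partners of x and y lie in S and are adjacent to x, resp. y; if
   neither separates x from y at radius 1, both are common neighbours of x and y, which
   is impossible since two vertices of C_n, n >= 5, have at most one common neighbour.
   For odd n the vertex n - 1 is unpaired, and separating it may need radius 2, hence
   k >= 2.  On C_4 the antipodal pairs work.  On C_3 a set resolves iff it has at least
   two vertices, so the first player wins: Maker moving first takes a vertex and pairs the
   other two, Maker moving second gets a single vertex. *)

From mathcomp Require Import all_boot zify.
Set Implicit Arguments. Unset Strict Implicit. Unset Printing Implicit Defensive.

Section MakerBreaker.
Variables (T : finType) (W : {set T} -> bool).
Implicit Types M B : {set T}.

Definition free (M B : {set T}) : {set T} := ~: (M :|: B).

Lemma free_setU1l x M B : free (x |: M) B = free M B :\ x.
Proof. by apply/setP => z; rewrite !inE; case: (z == x). Qed.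

Lemma free_setU1r x M B : free M (x |: B) = free M B :\ x.
Proof. by apply/setP => z; rewrite !inE; case: (z == x); rewrite ?orbT. Qed.

Lemma card_free_move f x M B :
  x \in free M B -> #|free M B| <= f.+1 -> #|free M B :\ x| <= f.
Proof. by move=> xF; rewrite (cardsD1 x) xF add1n ltnS. Qed.

Lemma maker_wins_end f mturn M B : free M B = set0 -> W M -> maker_wins W f mturn M B.
Proof. by case: f => [|f] //= F0; rewrite -/(free M B) F0 eqxx. Qed.

Lemma maker_wins_move f y M B :
  y \in free M B -> maker_wins W f false (y |: M) B -> maker_wins W f.+1 true M B.
Proof.
move=> yF win /=; rewrite -/(free M B).
have /negbTE-> : free M B != set0 by apply/set0Pn; exists y.
by apply/exists_inP; exists y.
Qed.

(* (f + mturn) %/ 2 bounds the number of moves left to Maker. *)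
Lemma maker_wins_small_set f mturn M B : maker_wins W f mturn M B ->
  exists2 S, W S & #|S| <= #|M| + (f + mturn) %/ 2.
Proof.
elim: f mturn M B => [|f IH] mturn M B /=; first by exists M; rewrite ?leq_addr.
case: ifP => [_ WM|/negbT/set0Pn[x xF]]; first by exists M; rewrite ?leq_addr.
case: mturn => /=.
  case/exists_inP => y _ /IH[S WS leS]; exists S => //.
  by move: leS; rewrite cardsU1; case: (y \notin M) => /=; lia.
by move/forall_inP/(_ x xF)/IH => [S WS leS]; exists S => //; move: leS; rewrite addn1 addn0.
Qed.

End MakerBreaker.

Section PairingStrategy.
Variables (T : finType) (W : {set T} -> bool) (P : pred T) (p : T -> T).
Implicit Types M B S : {set T}.
Hypothesis p_pairing : forall x, P x -> [/\ P (p x), p (p x) = x & p x != x].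

Definition hits_pairs (S : {set T}) : Prop := forall z, P z -> (z \in S) || (p z \in S).

Definition pairs_answered (M B : {set T}) : Prop :=
  forall z, P z -> z \in B -> (z \in M) || (p z \in M).

Definition wins_on_pairs (M : {set T}) : Prop :=
  forall S : {set T}, M \subset S -> hits_pairs S -> W S.

Lemma pairs_answeredSl M M' B :
  M \subset M' -> pairs_answered M B -> pairs_answered M' B.
Proof.
by move=> /subsetP sMM' ans z Pz zB; case/orP: (ans z Pz zB) => /sMM' ->; rewrite ?orbT.
Qed.

Lemma wins_on_pairsS M M' : M \subset M' -> wins_on_pairs M -> wins_on_pairs M'.
Proof. by move=> sMM' win S sM'S; apply: win; apply: subset_trans sM'S. Qed.

Lemma pairs_answered_setD1 M B x :
  pairs_answered M (B :\ x) -> (P x -> p x \notin free M B) -> pairs_answered M B.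
Proof.
move=> ans px_taken z Pz zB; have [zx|zx] := eqVneq z x.
  subst z; have [Ppx ppx pxx] := p_pairing Pz.
  move: (px_taken Pz); rewrite !inE negbK => /orP[-> | pxB]; first by rewrite orbT.
  by rewrite orbC -{2}ppx; apply: ans; rewrite // !inE pxx.
by apply: ans => //; rewrite !inE zx zB.
Qed.

Lemma pairing_end f mturn M B : free M B = set0 -> pairs_answered M B ->
  wins_on_pairs M -> maker_wins W f mturn M B.
Proof.
move=> F0 ans win; apply: (maker_wins_end _ _ F0) (win _ (subxx _) _) => z Pz.
case zM: (z \in M) => //=; have /ans : z \in B.
  by have := in_set0 z; rewrite -F0 !inE zM /= => /negbFE.
by rewrite zM; apply.
Qed.

(* Maker's answer: the partner of Breaker's last vertex x if it is still free. *)
Lemma pairing_reply M B x : free M B != set0 -> pairs_answered M (B :\ x) ->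
  exists2 y, y \in free M B & pairs_answered (y |: M) B.
Proof.
move=> Fn ans; case pxF: (P x && (p x \in free M B)).
  have /andP[_ pxFree] := pxF; exists (p x) => //.
  apply: pairs_answered_setD1 (pairs_answeredSl (subsetUr _ _) ans) _ => _.
  by rewrite free_setU1l !inE eqxx.
have [y yF] := set0Pn _ Fn; exists y => //.
apply: pairs_answeredSl (subsetUr _ _) (pairs_answered_setD1 ans _) => Px.
by move: pxF; rewrite Px => /negbT.
Qed.

(* At Maker's turn, Breaker's last vertex x may still be unanswered. *)
Lemma pairing_strategy f :
  (forall M B, #|free M B| <= f -> pairs_answered M B -> wins_on_pairs M ->
     maker_wins W f false M B) /\
  (forall M B x, #|free M B| <= f -> pairs_answered M (B :\ x) -> wins_on_pairs M ->
     maker_wins W f true M B).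
Proof.
have end_of_moves M B : #|free M B| <= 0 -> free M B = set0.
  by rewrite leqn0 cards_eq0 => /eqP.
elim: f => [|f [IHbreaker IHmaker]]; split.
- by move=> M B /end_of_moves F0; apply: pairing_end.
- move=> M B x /end_of_moves F0 ans.
  have px_taken : P x -> p x \notin free M B by rewrite F0 inE.
  exact: pairing_end F0 (pairs_answered_setD1 ans px_taken).
- move=> M B hc ans win; have [F0|Fn] := eqVneq (free M B) set0.
    exact: pairing_end.
  rewrite /= -/(free M B) (negbTE Fn); apply/forall_inP => x xF.
  have xB : x \notin B by move: xF; rewrite !inE negb_or => /andP[].
  by apply: (IHmaker _ _ x) => //; rewrite ?free_setU1r ?card_free_move ?setU1K.
- move=> M B x hc ans win; have [F0|Fn] := eqVneq (free M B) set0.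
    have px_taken : P x -> p x \notin free M B by rewrite F0 inE.
    exact: pairing_end F0 (pairs_answered_setD1 ans px_taken) win.
  have [y yF ans'] := pairing_reply Fn ans.
  have hc' : #|free (y |: M) B| <= f by rewrite free_setU1l card_free_move.
  exact: maker_wins_move yF (IHbreaker _ _ hc' ans' (wins_on_pairsS (subsetUr _ _) win)).
Qed.

Theorem pairing_strategy_outcome :
  (forall S, hits_pairs S -> W S) -> game_outcome W = Out_M.
Proof.
move=> win_pairs; have win0 : wins_on_pairs set0 by move=> S _; apply: win_pairs.
have ans0 M : pairs_answered M set0 by move=> z _; rewrite inE.
have fuel0 : #|@free T set0 set0| <= #|T| by rewrite max_card.
rewrite /game_outcome /maker_wins_first /maker_wins_second.
rewrite ((pairing_strategy _).1 _ _ fuel0 (ans0 _) win0).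
have [F0|/set0Pn[x _]] := eqVneq (@free T set0 set0) set0; first by rewrite pairing_end.
by rewrite ((pairing_strategy _).2 _ _ x fuel0) // set0D.
Qed.

End PairingStrategy.

Section Distances.
Variables (T : finType) (e : rel T).
Implicit Types (x y z w : T) (S : {set T}).

Lemma ball_subset m m' x : m <= m' -> ball e m x \subset ball e m' x.
Proof.
elim: m' => [|m' IH]; first by rewrite leqn0 => /eqP->.
rewrite leq_eqVlt => /orP[/eqP->//|/IH]; move/subset_trans; apply; exact: subsetUl.
Qed.

Lemma dist_k_leE k m x z :
  m <= k -> m < #|T| -> (dist_k e k x z <= m) = (z \in ball e m x).
Proof.
move=> mk mT; rewrite /dist_k /gdist geq_min (leqNgt k.+1) ltnS mk orbF.
apply/idP/idP => [le_dm | zm].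
  have lt_dT := leq_ltn_trans le_dm mT.
  have hs : has (fun r => z \in ball e r x) (iota 0 #|T|) by rewrite has_find size_iota.
  have := nth_find 0 hs; rewrite nth_iota // add0n.
  exact: (subsetP (ball_subset x le_dm)).
rewrite leqNgt; apply/negP => lt_md.
by have := before_find 0 lt_md; rewrite nth_iota // add0n zm.
Qed.

Lemma in_ballS m x z :
  (z \in ball e m.+1 x) = (z \in ball e m x) || [exists w in ball e m x, e w z].
Proof. by rewrite /= !inE. Qed.

Lemma in_ball1 x z : (z \in ball e 1 x) = (z == x) || e x z.
Proof.
rewrite in_ballS inE; congr (_ || _); apply/exists_inP/idP => [[w]|exz].
  by rewrite inE => /eqP->.
by exists x; rewrite ?inE.
Qed.

Lemma ball2_separates x y w z : e x w -> e w z -> z \notin ball e 1 y ->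
  (forall u, e y u -> ~~ e u z) -> (z \in ball e 2 x) != (z \in ball e 2 y).
Proof.
move=> exw ewz zy far; have -> : z \in ball e 2 x.
  by rewrite in_ballS; apply/orP; right; apply/exists_inP; exists w; rewrite ?in_ball1 ?exw ?orbT.
rewrite in_ballS (negbTE zy) /=; apply/exists_inP => -[u].
rewrite in_ball1 => /orP[/eqP-> eyz|/far/negbTE->//].
by move: zy; rewrite in_ball1 eyz orbT.
Qed.

Lemma dist_k_adj k x z : 0 < k -> 1 < #|T| -> x != z -> e x z -> dist_k e k x z = 1.
Proof.
move=> k_pos T2 xz exz; apply/eqP; rewrite eqn_leq dist_k_leE ?in_ball1 ?exz ?orbT //=.
by rewrite ltnNge dist_k_leE ?inE ?(eq_sym z) ?(ltnW T2).
Qed.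

Lemma resolving_k_of_balls k m S : m <= k -> m < #|T| ->
  (forall x y, x \notin S -> y \notin S ->
     (forall r z, r <= m -> z \in S -> (z \in ball e r x) = (z \in ball e r y)) -> x = y) ->
  resolving_k e k S.
Proof.
move=> mk mT separate; apply/forallP => x; apply/forallP => y; apply/implyP => xy.
apply/contraT => /exists_inPn same_dist.
have same_ball r z : r <= m -> z \in S -> (z \in ball e r x) = (z \in ball e r y).
  move=> rm zS; have rT := leq_ltn_trans rm mT.
  by rewrite -!(dist_k_leE _ _ (leq_trans rm mk) rT) (eqP (negbNE (same_dist z zS))).
have xS : x \notin S.
  by apply: contra xy => xS; have := same_ball 0 x (leq0n m) xS; rewrite !inE eqxx => <-.
have yS : y \notin S.
  by apply: contra xy => yS; have := same_ball 0 y (leq0n m) yS; rewrite !inE eqxx eq_sym => ->.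
by rewrite (separate x y xS yS same_ball) eqxx in xy.
Qed.

End Distances.

Definition cyc_adj (n a b : nat) : bool :=
  [|| a.+1 == b, b.+1 == a, (a.+1 == n) && (b == 0) | (b.+1 == n) && (a == 0)].

Lemma cyc_adj_common_uniq n a b c d : 5 <= n -> [/\ a < n, b < n, c < n & d < n] ->
  a != b -> cyc_adj n a c -> cyc_adj n b c -> cyc_adj n a d -> cyc_adj n b d -> c = d.
Proof. rewrite /cyc_adj; lia. Qed.

Definition mate_nat (a : nat) : nat := if odd a then a.-1 else a.+1.

Lemma mate_natK : involutive mate_nat.
Proof. by move=> [|a] //; rewrite /mate_nat /=; case oa: (odd a) => /=; rewrite oa. Qed.

Lemma mate_nat_neq a : mate_nat a != a.
Proof. by rewrite /mate_nat; case: a => [|a] //=; case: ifP => _; lia. Qed.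

Section Cycle.
Variable n : nat.
Implicit Types x y z w : 'I_n.
Local Notation e := (@cycle_rel n).

Lemma cycle_relE x y : e x y = cyc_adj n x y.
Proof.
have succ_mod a b : a < n -> b < n ->
    (a.+1 %% n == b) = (a.+1 == b) || (a.+1 == n) && (b == 0).
  move=> lt_an lt_bn; have [lt_a1n|] := ltnP a.+1 n; first by rewrite modn_small //; lia.
  move=> le_na1; have -> : a.+1 = n by lia.
  by rewrite modnn; lia.
rewrite /cycle_rel !succ_mod // /cyc_adj; lia.
Qed.

Definition paired x : bool := mate_nat x < n.
Definition mate x : 'I_n := insubd x (mate_nat x).

Lemma val_mate x : paired x -> val (mate x) = mate_nat x.
Proof. by move=> Px; rewrite val_insubd ifT. Qed.

Lemma mate_pairing x : paired x -> [/\ paired (mate x), mate (mate x) = x & mate x != x].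
Proof.
move=> Px; have mx := val_mate Px.
have Pmx : paired (mate x) by rewrite /paired mx mate_natK.
split=> //; first by apply: val_inj; rewrite val_mate // mx mate_natK.
by rewrite -val_eqE mx mate_nat_neq.
Qed.

Lemma cyc_adj_mate x : paired x -> cyc_adj n x (mate x).
Proof.
move=> Px; rewrite /cyc_adj val_mate // /mate_nat.
by case: ifP; case: (nat_of_ord x) => [|a] //=; rewrite eqxx ?orbT.
Qed.

Lemma unpaired x : ~~ paired x -> x.+1 = n /\ odd n.
Proof.
rewrite /paired /mate_nat -leqNgt; have := ltn_ord x.
case: ifP => odd_x lt_xn le_n; first by have := leq_ltn_trans (leq_pred x) lt_xn; lia.
have xn : x.+1 = n by lia.
split=> //; have : odd x.+1 by rewrite /= odd_x.
by rewrite xn.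
Qed.

Lemma in_cycle_ball1 x z : (z \in ball e 1 x) = (val z == val x) || cyc_adj n x z.
Proof. by rewrite in_ball1 cycle_relE. Qed.

Section Separation.
Variable S : {set 'I_n}.
Hypotheses (n_ge5 : 5 <= n) (hitS : hits_pairs paired mate S).

Lemma mate_in x : paired x -> x \notin S -> mate x \in S.
Proof. by move=> Px xS; move: (hitS Px); rewrite (negbTE xS). Qed.

Lemma cyc_adj_trace x y z : x \notin S -> y \notin S -> z \in S ->
  (z \in ball e 1 x) = (z \in ball e 1 y) -> cyc_adj n x z = cyc_adj n y z.
Proof.
move=> xS yS zS; have zx : (z == x) = false by apply: contraNF xS => /eqP <-.
have zy : (z == y) = false by apply: contraNF yS => /eqP <-.
by rewrite !in_ball1 !cycle_relE zx zy.
Qed.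

(* y = n - 1 is unpaired and x shares a neighbour with it; the pair next to x on the
   far side from y separates them at radius 1 if n = 5 and at radius 2 otherwise. *)
Lemma cycle_separate_last x y : odd n -> y.+1 = n -> (x = 1 :> nat) \/ x + 3 = n ->
  x \notin S -> y \notin S ->
  ~ (forall r z, r <= 2 -> z \in S -> (z \in ball e r x) = (z \in ball e r y)).
Proof.
move=> odd_n yn xv xS yS same.
have adj_same z : z \in S -> cyc_adj n x z = cyc_adj n y z.
  by move=> zS; apply: cyc_adj_trace => //; apply: same.
have n_neq6 : n != 6 by apply: contraTneq odd_n => ->.
have same2 z : z \in S -> (z \in ball e 2 x) = (z \in ball e 2 y).
  by move=> zS; apply: same.
have n1 : 1 < n by lia.
have n3 : 3 < n by lia.
have lx := ltn_ord x.
case: xv => [x1|xn3].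
- have P2 : paired (Ordinal (ltnW n3)) by [].
  case/orP: (hitS P2) => [z2S|].
    by have := adj_same _ z2S; rewrite /cyc_adj /= x1; lia.
  have -> : mate (Ordinal (ltnW n3)) = Ordinal n3 by apply: val_inj; rewrite val_mate.
  move=> z3S; have [n5|n_neq5] := eqVneq n 5.
    by have := adj_same _ z3S; rewrite /cyc_adj /= x1; lia.
  suff : (Ordinal n3 \in ball e 2 x) != (Ordinal n3 \in ball e 2 y).
    by rewrite same2 ?eqxx.
  apply: (ball2_separates (w := Ordinal (ltnW n3)));
    rewrite ?in_cycle_ball1 ?cycle_relE /cyc_adj /= ?x1; try lia.
  by move=> w; rewrite !cycle_relE /cyc_adj /=; have := ltn_ord w; lia.
- have P0 : paired (Ordinal (ltnW n1)) by rewrite /paired /=.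
  case/orP: (hitS P0) => [z0S|].
    by have := adj_same _ z0S; rewrite /cyc_adj /=; lia.
  have -> : mate (Ordinal (ltnW n1)) = Ordinal n1 by apply: val_inj; rewrite val_mate.
  move=> z1S; have [n5|n_neq5] := eqVneq n 5.
    by have := adj_same _ z1S; rewrite /cyc_adj /=; lia.
  suff : (Ordinal n1 \in ball e 2 y) != (Ordinal n1 \in ball e 2 x).
    by rewrite same2 ?eqxx.
  apply: (ball2_separates (w := Ordinal (ltnW n1)));
    rewrite ?in_cycle_ball1 ?cycle_relE /cyc_adj /=; try lia.
  by move=> w; rewrite !cycle_relE /cyc_adj /=; have := ltn_ord w; lia.
Qed.

Lemma cycle_pairs_separate x y : x \notin S -> y \notin S ->
  (forall r z, r <= 1 + odd n -> z \in S -> (z \in ball e r x) = (z \in ball e r y)) ->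
  x = y.
Proof.
wlog Px : x y / paired x.
  move=> gen xS yS same; case Px: (paired x); first exact: gen.
  case Py: (paired y); first by apply/esym/gen => // r z rm zS; rewrite same.
  have [xn _] := unpaired (negbT Px); have [yn _] := unpaired (negbT Py).
  by apply: val_inj => /=; lia.
move=> xS yS same; have [//|xy] := eqVneq x y; exfalso.
have adj_same z : z \in S -> cyc_adj n x z = cyc_adj n y z.
  by move=> zS; apply: cyc_adj_trace => //; apply: same; rewrite ?leq_addr.
have mxS := mate_in Px xS; have ax := cyc_adj_mate Px.
have [Py|/unpaired[yn odd_n]] := boolP (paired y).
  have myS := mate_in Py yS; have ay := cyc_adj_mate Py.
  have [_ mxK _] := mate_pairing Px; have [_ myK _] := mate_pairing Py.
  suff mxy : mate x = mate y by move: xy; rewrite -mxK mxy myK eqxx.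
  apply: val_inj; apply: (cyc_adj_common_uniq n_ge5 _ _ ax _ _ ay).
  - by rewrite !ltn_ord.
  - by rewrite val_eqE.
  - by rewrite -adj_same.
  - by rewrite adj_same.
apply: (cycle_separate_last odd_n yn _ xS yS); last first.
  by move=> r z r2; apply: same; rewrite odd_n.
have := adj_same _ mxS; rewrite ax => /esym ay; rewrite -val_eqE /= in xy.
by move: ax ay; have := ltn_ord x; have := ltn_ord (mate x); rewrite /cyc_adj; lia.
Qed.

End Separation.

End Cycle.

Lemma cycle_outcome_M n k : 5 <= n -> 0 < k -> (odd n -> 1 < k) ->
  O_Rk (@cycle_rel n) k = Out_M.
Proof.
move=> n_ge5 k_pos k_ge2; apply: (pairing_strategy_outcome (@mate_pairing n)) => S hitS.
apply: (resolving_k_of_balls (m := 1 + odd n)) => [|| x y].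
- by case: (odd n) k_ge2 => // ->.
- by rewrite card_ord; case: (odd n); lia.
- exact: cycle_pairs_separate.
Qed.

Definition opposite4 (x : 'I_4) : 'I_4 := inord ((x + 2) %% 4).

Lemma val_opposite4 x : opposite4 x = (x + 2) %% 4 :> nat.
Proof. by rewrite inordK // ltn_pmod. Qed.

Lemma opposite4_pairing x :
  predT x -> [/\ predT (opposite4 x), opposite4 (opposite4 x) = x & opposite4 x != x].
Proof.
have := ltn_ord x; split=> //; last by rewrite -val_eqE /= val_opposite4; lia.
by apply: val_inj; rewrite /= !val_opposite4; lia.
Qed.

Lemma cycle4_outcome k : 0 < k -> O_Rk (@cycle_rel 4) k = Out_M.
Proof.
move=> k_pos; apply: (pairing_strategy_outcome opposite4_pairing) => S hitS.
apply: (resolving_k_of_balls (m := 1)); rewrite ?card_ord // => x y xS yS same.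
have oxS : opposite4 x \in S by move: (hitS x isT); rewrite (negbTE xS).
have := cyc_adj_trace xS yS oxS (same 1 _ (leqnn 1) oxS).
have : y != opposite4 x :> nat by apply: contraNneq yS => /val_inj ->.
rewrite /cyc_adj val_opposite4; have := ltn_ord x; have := ltn_ord y.
by move=> *; apply: val_inj => /=; lia.
Qed.

Definition mate3 (x : 'I_3) : 'I_3 := inord ((3 - x) %% 3).

Lemma val_mate3 x : mate3 x = (3 - x) %% 3 :> nat.
Proof. by rewrite inordK // ltn_pmod. Qed.

Lemma mate3_pairing x : predC1 ord0 x ->
  [/\ predC1 ord0 (mate3 x), mate3 (mate3 x) = x & mate3 x != x].
Proof.
rewrite /= -!val_eqE /= !val_mate3 => x0; have := ltn_ord x.
by split; [lia | apply: val_inj; rewrite /= !val_mate3; lia | lia].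
Qed.

Lemma cycle3_resolving k (S : {set 'I_3}) :
  ord0 \in S -> hits_pairs (predC1 ord0) mate3 S -> resolving_k (@cycle_rel 3) k S.
Proof.
move=> S0 hitS; apply: (resolving_k_of_balls (m := 0)); rewrite ?card_ord // => x y xS yS _.
have x0 : x != ord0 by apply: contraNneq xS => ->.
have y0 : y != ord0 by apply: contraNneq yS => ->.
move: (hitS x x0); rewrite (negbTE xS) => mxS.
have : y != mate3 x :> nat by apply: contraNneq yS => /val_inj ->.
move: x0 y0; rewrite -!val_eqE /= val_mate3; have := ltn_ord x; have := ltn_ord y.
by move=> *; apply: val_inj => /=; lia.
Qed.

Lemma cycle3_not_resolving k (S : {set 'I_3}) :
  0 < k -> #|S| <= 1 -> ~~ resolving_k (@cycle_rel 3) k S.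
Proof.
move=> k_pos S1; have : 1 < #|~: S| by have := cardsC S; rewrite card_ord; lia.
case/card_gt1P => x [y [xS yS xy]]; rewrite !inE in xS yS.
apply/negP => /forallP/(_ x)/forallP/(_ y)/implyP/(_ xy)/exists_inP[z zS].
have dist1 u : u \notin S -> dist_k (@cycle_rel 3) k u z = 1.
  move=> uS; apply: dist_k_adj; rewrite ?card_ord //.
    by apply: contraNneq uS => ->.
  rewrite cycle_relE /cyc_adj; have := ltn_ord u; have := ltn_ord z.
  have : u != z :> nat by apply: contraNneq uS => /val_inj ->.
  lia.
by rewrite !dist1 ?eqxx.
Qed.

Lemma cycle3_outcome k : 0 < k -> O_Rk (@cycle_rel 3) k = Out_N.
Proof.
move=> k_pos; rewrite /O_Rk /game_outcome /maker_wins_first /maker_wins_second card_ord.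
have -> : maker_wins (resolving_k (@cycle_rel 3) k) 3 true set0 set0.
  apply: (maker_wins_move (y := ord0)); first by rewrite !inE.
  apply: ((pairing_strategy _ mate3_pairing _).1).
  - by rewrite /free !setU0 cardsC1 card_ord.
  - by move=> z _; rewrite inE.
  - by move=> S; rewrite setU0 sub1set => S0 hitS; apply: cycle3_resolving.
have /negbTE-> // : ~~ maker_wins (resolving_k (@cycle_rel 3) k) 3 false set0 set0.
apply/negP => /maker_wins_small_set[S resS]; rewrite cards0 => S1.
by move: resS; apply/negP; apply: cycle3_not_resolving.
Qed.

Theorem proposition3p5 (k n : nat) : 0 < k -> 3 <= n ->
  [/\ n = 3 -> O_Rk (@cycle_rel n) k = Out_N,
      (4 <= n) && ~~ odd n -> O_Rk (@cycle_rel n) k = Out_M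
    & (5 <= n) && odd n && (2 <= k) -> O_Rk (@cycle_rel n) k = Out_M].
Proof.
move=> k_pos _; split.
- by move=> ->; apply: cycle3_outcome.
- case/andP=> n_ge4 n_even; have [->|n_neq4] := eqVneq n 4; first exact: cycle4_outcome.
  by apply: cycle_outcome_M; rewrite ?(negbTE n_even) //; lia.
- by case/andP=> /andP[n_ge5 _] k_ge2; apply: cycle_outcome_M.
Qed.
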